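(* Let $\Lambda=\{a_1<\dots<a_m\}$ be finite with $m\ge4$. A certainty preserving PAF $\psi:\mathcal P^N\to\mathcal P$ is both Level-SP and $L_1^{\mathcal P}$-SP if and only if it is dictatorial, i.e. there is $i\in N$ with $\psi(\mathbf p)=p_i$ for all $\mathbf p$.
   Context: $N=\{1,\dots,n\}$; $\mathcal P$ is the set of probability distributions on $\Lambda$, identified with vectors $(p(a_1),\dots,p(a_m))$; $\mathcal C$ the CDFs, $\pi(p)(a)=p(\{x\le a\})$. A PAF is a map $\psi:\mathcal P^N\to\mathcal P$ with associated CAF $\Psi$ given by $\Psi(\pi(p_1),\dots,\pi(p_n))=\pi(\psi(p_1,\dots,p_n))$; $P_i=\pi(p_i)$. $\mathbf z_{-i}(z_i')$ is $\mathbf z$ with $i$-th coordinate replaced by $z_i'$. $\psi$ is Level-SP if for every $i$, $\mathbf P$, $P_i'$, $a$: $P_i(a)<\Psi(\mathbf P)(a)\Rightarrow\Psi(\mathbf P)(a)\le\Psi(\mathbf P_{-i}(P_i'))(a)$ and $P_i(a)>\Psi(\mathbf P)(a)\Rightarrow\Psi(\mathbf P)(a)\ge\Psi(\mathbf P_{-i}(P_i'))(a)$. $\psi$ is $L_1^{\mathcal P}$-SP if for all $i$, $\mathbf p\in\mathcal P^N$, $p_i'\in\mathcal P$: $\|\psi(\mathbf p)-p_i\|_1\le\|\psi(\mathbf p_{-i}(p_i'))-p_i\|_1$, where $\|p-q\|_1=\sum_{k=1}^m|p(a_k)-q(a_k)|$. $\psi$ is certainty preserving if for every profile $\mathbf p$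 and $A\subseteq\Lambda$, $p_i(A)=1$ for all $i$ implies $\psi(\mathbf p)(A)=1$. *)

(* Lambda = 'I_m (a_1 < ... < a_m identified with 0 < ... < m-1),
   N = 'I_n, reals = an arbitrary realType R. *)
From mathcomp Require Import all_boot all_order all_algebra.
From mathcomp Require Import reals.
Set Implicit Arguments. Unset Strict Implicit. Unset Printing Implicit Defensive.
Import Order.TTheory GRing.Theory Num.Theory.
Local Open Scope ring_scope.

Definition is_prob (R : realType) (m : nat) (p : 'I_m -> R) : Prop :=
  (forall k, 0 <= p k) /\ \sum_(k < m) p k = 1.

Record prob (R : realType) (m : nat) := Prob {
  pval :> 'I_m -> R;
  pvalP : is_prob pval }.

Definition probA (R : realType) m (p : prob R m) (A : {set 'I_m}) : R :=
  \sum_(k in A) p k.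

Definition cdf (R : realType) m (p : prob R m) (a : 'I_m) : R :=
  \sum_(k < m | (k <= a)%N) p k.

Definition upd (T : Type) n (z : 'I_n -> T) (i : 'I_n) (z' : T) : 'I_n -> T :=
  fun j => if j == i then z' else z j.

Definition PAF (R : realType) n m := ('I_n -> prob R m) -> prob R m.

(* Level-SP, stated via the associated CAF Psi(pi p_1,...,pi p_n) = pi(psi p) *)
Definition level_SP (R : realType) n m (psi : PAF R n m) : Prop :=
  forall (i : 'I_n) (p : 'I_n -> prob R m) (pi' : prob R m) (a : 'I_m),
    (cdf (p i) a < cdf (psi p) a -> cdf (psi p) a <= cdf (psi (upd p i pi')) a) /\
    (cdf (p i) a > cdf (psi p) a -> cdf (psi p) a >= cdf (psi (upd p i pi')) a).

Definition L1dist (R : realType) m (p q : 'I_m -> R) : R :=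
  \sum_(k < m) `|p k - q k|.

Definition L1_SP (R : realType) n m (psi : PAF R n m) : Prop :=
  forall (i : 'I_n) (p : 'I_n -> prob R m) (pi' : prob R m),
    L1dist (psi p) (p i) <= L1dist (psi (upd p i pi')) (p i).

Definition certainty_preserving (R : realType) n m (psi : PAF R n m) : Prop :=
  forall (p : 'I_n -> prob R m) (A : {set 'I_m}),
    (forall i, probA (p i) A = 1) -> probA (psi p) A = 1.

Definition dictatorial (R : realType) n m (psi : PAF R n m) : Prop :=
  exists i : 'I_n, forall p : 'I_n -> prob R m, psi p = p i.

From mathcomp Require Import all_boot all_order all_algebra.
From mathcomp Require Import reals lra zify.
From Stdlib Require Import Classical ProofIrrelevance FunctionalExtensionality.
Set Implicit Arguments. Unset Strict Implicit. Unset Printing Implicit Defensive.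
Import Order.TTheory GRing.Theory Num.Theory.
Local Open Scope ring_scope.

(* Level-SP makes the output CDF at a level depend
      only on the reported CDF values at that level (level_invariance), and
      certainty preservation turns profiles of two-point distributions
      (carried by the first and last alternatives) into two-point outputs.
      Hence a single function [Phi] on the cube [0,1]^n computes every output
      CDF value below the last level (Phi_rep).  Level-SP makes [Phi] a
      generalized median in each coordinate (Phi_clamped), and certainty
      preservation gives [Phi 0 = 0] and [Phi 1 = 1].
   2. L1-SP.  Letting two agents report three-level distributions, which needs
      four alternatives, shows that two coordinates of [Phi] are never
      pivotal together at the bottom-left or at the top-right corner of a
      two-dimensional slice (Phi_no_low_pivots, Phi_no_high_pivots).
   3. A coordinatewise clamped function on the cube with these properties is
      a coordinate projection (clamped_projection).
   4. The agent of that coordinate dictates every CDF value, hence the whole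
      output distribution (projection_dictatorial). *)

Section Distributions.
Variables (R : realType) (m : nat).
Implicit Types (p q : prob R m).

Lemma prob_ge0 p k : 0 <= p k.
Proof. by case: p => f [h1 h2]; apply: h1. Qed.

Lemma prob_sum p : \sum_(k < m) p k = 1.
Proof. by case: p => f [h1 h2]; apply: h2. Qed.

Lemma prob_ext p q : (forall k, p k = q k) -> p = q.
Proof.
case: p q => f hf [g hg] /= e.
have efg : f = g by apply: functional_extensionality.
by subst g; congr Prob; apply: proof_irrelevance.
Qed.

(* The CDF of [p] at a natural level [j]; levels beyond the last atom give 1. *)
Definition cdfn p (j : nat) : R := \sum_(k < m | (k <= j)%N) p k.

Lemma cdfn_ord p (a : 'I_m) : cdfn p a = cdf p a.
Proof. by []. Qed.

Lemma cdfn_ge0 p j : 0 <= cdfn p j.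
Proof. by apply: sumr_ge0 => k _; apply: prob_ge0. Qed.

Lemma cdfn_le1 p j : cdfn p j <= 1.
Proof.
rewrite -(prob_sum p) /cdfn [X in _ <= X](bigID (fun k : 'I_m => (k <= j)%N)) /=.
by rewrite lerDl; apply: sumr_ge0 => k _; apply: prob_ge0.
Qed.

Lemma cdfn_last p j : (m <= j.+1)%N -> cdfn p j = 1.
Proof.
move=> h; rewrite -(prob_sum p) /cdfn; apply: eq_bigl => k.
by have := ltn_ord k; lia.
Qed.

Lemma cdf_ge0 p a : 0 <= cdf p a. Proof. exact: cdfn_ge0. Qed.
Lemma cdf_le1 p a : cdf p a <= 1. Proof. exact: cdfn_le1. Qed.

Lemma mass_cdfn p (k : 'I_m) :
  p k = cdfn p k - (if k == 0%N :> nat then 0 else cdfn p k.-1).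
Proof.
rewrite /cdfn (bigD1 k) //=; case: ifP => hk.
  rewrite big_pred0 ?subr0 ?addr0 // => i.
  by apply/negbTE; rewrite negb_and -val_eqE /= (eqP hk); lia.
rewrite (eq_bigl (fun i : 'I_m => (i <= k.-1)%N)) ?addrK // => i.
by rewrite -val_eqE /=; move/negbT: hk; lia.
Qed.

Lemma prob_cdfn_inj p q : (forall j, cdfn p j = cdfn q j) -> p = q.
Proof. by move=> e; apply: prob_ext => k; rewrite (mass_cdfn p) (mass_cdfn q) !e. Qed.

End Distributions.

Lemma sum_le0 (R : realType) m (g : nat -> R) :
  \sum_(k < m.+1 | (k <= 0)%N) g k = g 0%N.
Proof.
rewrite (bigD1 ord0) //= big_pred0 ?addr0 // => k.
by apply/negbTE; rewrite negb_and -val_eqE /=; lia.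
Qed.

Lemma sum_leS (R : realType) m (g : nat -> R) j :
  \sum_(k < m | (k <= j.+1)%N) g k =
  \sum_(k < m | (k <= j)%N) g k + (if (j.+1 < m)%N then g j.+1 else 0).
Proof.
case: ifP => h.
  rewrite (bigD1 (Ordinal h)) //= addrC; congr (_ + _); apply: eq_bigl => k.
  by rewrite -val_eqE /=; lia.
rewrite addr0; apply: eq_bigl => k; have := ltn_ord k; move/negbT: h; lia.
Qed.

(* Distributions with prescribed CDF values: any sequence of levels is first
   made nondecreasing and [0,1]-valued, then read as a CDF. *)
Section OfLevels.
Variables (R : realType) (m : nat).
Implicit Types (G : nat -> R) (v : R).

Definition clamp01 v : R := Num.min 1 (Num.max 0 v).

Lemma clamp01_ge0 v : 0 <= clamp01 v.
Proof. by rewrite le_min ler01 le_max lexx. Qed.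

Lemma clamp01_le1 v : clamp01 v <= 1.
Proof. by rewrite ge_min lexx. Qed.

Lemma clamp01_id v : 0 <= v <= 1 -> clamp01 v = v.
Proof. by case/andP=> h0 h1; rewrite /clamp01 max_r // min_r. Qed.

Fixpoint runmax G (j : nat) : R :=
  if j is j'.+1 then Num.max (runmax G j') (clamp01 (G j)) else clamp01 (G 0%N).

Definition lvl G (j : nat) : R := if (j < m)%N then runmax G j else 1.

Definition lvl_mass G (j : nat) : R :=
  lvl G j - (if j is j'.+1 then lvl G j' else 0).

Lemma runmax_bounds G j : 0 <= runmax G j <= 1.
Proof.
elim: j => [|j /andP[h0 h1]] /=; first by rewrite clamp01_ge0 clamp01_le1.
by rewrite le_max h0 ge_max h1 clamp01_le1.
Qed.

Lemma lvl_mass_ge0 G j : 0 <= lvl_mass G j.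
Proof.
rewrite /lvl_mass subr_ge0; case: j => [|j] /=.
  by rewrite /lvl; case: ifP => _; [case/andP: (runmax_bounds G 0) | rewrite ler01].
rewrite /lvl; case: ifP => hj; case: ifP => hj1 //=.
- by rewrite le_max lexx.
- by case/andP: (runmax_bounds G j).
- by rewrite (ltn_trans (ltnSn j) hj1) in hj.

Qed.

Lemma lvl_mass_sum G j : \sum_(k < m.+1 | (k <= j)%N) lvl_mass G k = lvl G j.
Proof.
elim: j => [|j IH]; first by rewrite sum_le0 /lvl_mass subr0.
rewrite sum_leS IH /lvl_mass ltnS; case: ifP => hj; first by rewrite addrC subrK.
have hj1 : (j.+1 < m)%N = false by lia.
by rewrite addr0 /lvl hj hj1.
Qed.

Lemma of_levels_prob G : is_prob (fun k : 'I_m.+1 => lvl_mass G k).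
Proof.
split=> [k|]; first exact: lvl_mass_ge0.
rewrite (eq_bigl (fun k : 'I_m.+1 => (k <= m)%N)) ?lvl_mass_sum ?/lvl ?ltnn //.
by move=> k; rewrite -ltnS ltn_ord.
Qed.

Definition of_levels G : prob R m.+1 := Prob (of_levels_prob G).

Lemma cdf_of_levels G (a : 'I_m.+1) : (a < m)%N -> cdf (of_levels G) a = runmax G a.
Proof. by move=> ha; rewrite /cdf lvl_mass_sum /lvl ha. Qed.

Lemma runmax_const v j : runmax (fun _ => v) j = clamp01 v.
Proof. by elim: j => //= j ->; rewrite maxxx. Qed.

Lemma runmax_id G j :
  (forall k, (k <= j)%N -> 0 <= G k <= 1) ->
  (forall k, (k < j)%N -> G k <= G k.+1) -> runmax G j = G j.
Proof.
elim: j => [|j IH] hb hm /=; first by rewrite clamp01_id ?hb.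
have hbj : forall k, (k <= j)%N -> 0 <= G k <= 1 by move=> k hk; apply: hb; lia.
have hmj : forall k, (k < j)%N -> G k <= G k.+1 by move=> k hk; apply: hm; lia.
by rewrite IH // clamp01_id ?max_r ?hm ?hb.
Qed.

End OfLevels.

Section Updates.
Variables (T : Type) (n : nat).
Implicit Types (z : 'I_n -> T) (i j : 'I_n) (v w : T).

Lemma upd_eq z i v : upd z i v i = v.
Proof. by rewrite /upd eqxx. Qed.

Lemma upd_neq z i j v : j != i -> upd z i v j = z j.
Proof. by rewrite /upd => /negbTE ->. Qed.

Lemma upd_same z i : upd z i (z i) = z.
Proof. by apply: functional_extensionality => j; rewrite /upd; case: eqP => [->|]. Qed.

Lemma upd_upd z i v w : upd (upd z i v) i w = upd z i w.
Proof. by apply: functional_extensionality => j; rewrite /upd; case: eqP. Qed.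

Lemma upd_comm z i j v w : i != j -> upd (upd z i v) j w = upd (upd z j w) i v.
Proof.
move=> hij; apply: functional_extensionality => k; rewrite /upd.
have [-> | hkj] := eqVneq k j; last by case: eqP.
by case: eqP => // hji; rewrite hji eqxx in hij.
Qed.

Lemma coord_ind (Q : ('I_n -> T) -> Prop) x y :
  Q x -> (forall z j, Q z -> Q (upd z j (y j))) -> Q y.
Proof.
move=> Qx step.
pose mix (k : nat) := fun j : 'I_n => if (j < k)%N then y j else x j.
have Qmix : forall k, (k <= n)%N -> Q (mix k).
  elim=> [|k IH] hk.
    by have -> : mix 0%N = x by apply: functional_extensionality.
  have -> : mix k.+1 = upd (mix k) (Ordinal hk) (y (Ordinal hk)).
    apply: functional_extensionality => j; rewrite /mix /upd -val_eqE /=.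
    case: eqP => [hkj|hne]; last by rewrite ltnS leq_eqVlt; case: eqP.
    have -> : Ordinal hk = j by apply: val_inj.
    by rewrite hkj ltnSn.
  by apply: step; apply: IH; apply: ltnW.
have -> : y = mix n by apply: functional_extensionality => j; rewrite /mix ltn_ord.
exact: Qmix.
Qed.

End Updates.

Lemma level_invariance (R : realType) n m (psi : PAF R n m) :
  level_SP psi -> forall i P q a,
  cdf q a = cdf (P i) a -> cdf (psi (upd P i q)) a = cdf (psi P) a.
Proof.
move=> hL i P q a hq.
have [A1 A2] := hL i P q a.
have [B1 B2] := hL i (upd P i q) (P i) a.
rewrite upd_upd upd_same upd_eq hq in B1 B2.
move: A1 A2 B1 B2; set G := cdf (psi P) a; set G' := cdf (psi _) a.
set x := cdf (P i) a => A1 A2 B1 B2.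
case: (ltrgtP x G) => h1.
- by have := A1 h1 => h2; have := B1 (lt_le_trans h1 h2); lra.
- by have := A2 h1 => h2; have := B2 (le_lt_trans h2 h1); lra.
- by case: (ltrgtP x G') => h2; [have := B1 h2 | have := B2 h2 | idtac]; lra.
Qed.

Section CertaintyPreservation.
Variables (R : realType) (n m : nat) (psi : PAF R n m).

Lemma probA_one (p : prob R m) (A : {set 'I_m}) :
  (forall k, k \notin A -> p k = 0) -> probA p A = 1.
Proof.
move=> h; rewrite /probA -(prob_sum p) [RHS](bigID (mem A)) /=.
by rewrite [X in _ = _ + X]big1 ?addr0 // => k /h.
Qed.

Lemma probA_zero (p : prob R m) (A : {set 'I_m}) :
  probA p A = 1 -> forall k, k \notin A -> p k = 0.
Proof.
move=> h k hk.
have e : \sum_(k | k \notin A) p k = 0.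
  by have := prob_sum p; rewrite (bigID (mem A)) /= -/(probA p A) h; lra.
by apply: (psumr_eq0P _ e) => // j _; apply: prob_ge0.
Qed.

Lemma certainty_support : certainty_preserving psi ->
  forall (P : 'I_n -> prob R m) (A : {set 'I_m}),
  (forall i k, k \notin A -> P i k = 0) -> forall k, k \notin A -> psi P k = 0.
Proof. by move=> hC P A h; apply: probA_zero; apply: hC => i; apply: probA_one; apply: h. Qed.

End CertaintyPreservation.

Section LevelSPExtremes.
Variables (R : realType) (n m : nat) (psi : PAF R n m).
Hypothesis hL : level_SP psi.

Lemma level_SP_report0 i P q a :
  cdf q a = 0 -> cdf (psi (upd P i q)) a <= cdf (psi P) a.
Proof.
move=> hq; have [B1 _] := hL i (upd P i q) (P i) a.
rewrite upd_upd upd_same upd_eq hq in B1.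
have := cdf_ge0 (psi (upd P i q)) a; rewrite le_eqVlt => /orP[/eqP <-|/B1 //].
exact: cdf_ge0.
Qed.

Lemma level_SP_report1 i P q a :
  cdf q a = 1 -> cdf (psi P) a <= cdf (psi (upd P i q)) a.
Proof.
move=> hq; have [_ B2] := hL i (upd P i q) (P i) a.
rewrite upd_upd upd_same upd_eq hq in B2.
have := cdf_le1 (psi (upd P i q)) a; rewrite le_eqVlt => /orP[/eqP ->|/B2 //].
exact: cdf_le1.
Qed.

End LevelSPExtremes.

Lemma eq_of_le_not_lt (R : realDomainType) (a b : R) : a <= b -> ~ a < b -> a = b.
Proof. by rewrite le_eqVlt => /orP[/eqP // | h] /(_ h). Qed.

(* [g] is the projection of [v] on the interval [[lo, hi]]: it lies in the
   interval, and it differs from [v] only when [v] lies outside of it. *)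
Definition clamped (R : realDomainType) (v lo hi g : R) : Prop :=
  [/\ lo <= g, g <= hi, (v < g -> g = lo) & (g < v -> g = hi)].

Section Clamped.
Variables (R : realDomainType) (v lo hi g : R).
Hypothesis hg : clamped v lo hi g.

Lemma clamped_le : lo <= hi.
Proof. by case: hg => h1 h2 _ _; apply: le_trans h2. Qed.

Lemma clamped_point : lo = hi -> g = lo.
Proof. by case: hg => h1 h2 _ _ e; apply/eqP; rewrite eq_le h1 e h2. Qed.

Lemma clamped_mid : lo <= v -> v <= hi -> g = v.
Proof. by case: hg => ? ? c3 c4 ? ?; case: (ltrgtP v g) => e; [have := c3 e | have := c4 e | ]; lra. Qed.

Lemma clamped_lo : v <= lo -> g = lo.
Proof. by case: hg => ? ? c3 c4 ?; case: (ltrgtP v g) => e; [have := c3 e | have := c4 e | ]; lra. Qed.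

Lemma clamped_hi : hi <= v -> g = hi.
Proof. by case: hg => ? ? c3 c4 ?; case: (ltrgtP v g) => e; [have := c3 e | have := c4 e | ]; lra. Qed.

Lemma clamped_uniq g' : clamped v lo hi g' -> g' = g.
Proof.
case: hg => a1 a2 a3 a4 [b1 b2 b3 b4].
case: (ltrgtP v g) => h1; case: (ltrgtP v g') => h2;
  first [ have e1 := a3 h1 | have e1 := a4 h1 | have e1 := erefl g ];
  first [ have e2 := b3 h2 | have e2 := b4 h2 | have e2 := erefl g ]; lra.
Qed.

End Clamped.

Definition unit_cube (R : realDomainType) n (x : 'I_n -> R) : Prop :=
  forall k, 0 <= x k <= 1.

Lemma unit_cube_upd (R : realDomainType) n (x : 'I_n -> R) i v :
  unit_cube x -> 0 <= v <= 1 -> unit_cube (upd x i v).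
Proof. by move=> ux hv k; rewrite /upd; case: eqP. Qed.

Lemma in01_0 (R : realDomainType) : (0 : R) <= (0 : R) <= 1.
Proof. by rewrite lexx ler01. Qed.

Lemma in01_1 (R : realDomainType) : (0 : R) <= (1 : R) <= 1.
Proof. by rewrite lexx ler01. Qed.

(* From now on there are [M.+4 >= 4] alternatives; the first one has index 0
   and the last one index [M.+3]. *)

(* The distribution putting mass [v] (clamped to [0,1]) on the first
   alternative and the rest on the last one: its CDF is [v] at every level
   below the last. *)
Definition two_point (R : realType) M (v : R) : prob R M.+4 :=
  of_levels M.+3 (fun _ => v).

Lemma cdf_two_point (R : realType) M (v : R) (a : 'I_M.+4) :
  (a < M.+3)%N -> cdf (two_point M v) a = clamp01 v.
Proof. by move=> ha; rewrite cdf_of_levels // runmax_const. Qed.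

Lemma two_point_mass (R : realType) M (v : R) (k : 'I_M.+4) :
  two_point M v k =
  if k == 0%N :> nat then clamp01 v else if k == M.+3 :> nat then 1 - clamp01 v else 0.
Proof.
rewrite /= /lvl_mass /lvl; case: k => -[|k] hk /=; first by rewrite subr0.
rewrite runmax_const maxxx eqSS; have [->|hkM] := eqVneq k M.+2; first by rewrite ltnn ltnSn.
have h1 : (k.+1 < M.+3)%N by move: hkM; lia.
have h2 : (k < M.+3)%N by lia.
by rewrite h1 h2 subrr.
Qed.

Lemma cdf_ends_support (R : realType) M (p : prob R M.+4) (a : 'I_M.+4) :
  (forall k : 'I_M.+4, k != 0%N :> nat -> k != M.+3 :> nat -> p k = 0) ->
  (a < M.+3)%N -> cdf p a = p ord0.
Proof.
move=> h ha; rewrite /cdf (bigD1 ord0) //= big1 ?addr0 // => k /andP [hka hk0].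
by apply: h; rewrite -val_eqE /= in hk0 => //; lia.
Qed.

Lemma cdf_first (R : realType) m (p : prob R m.+1) : cdf p ord0 = p ord0.
Proof. by rewrite /cdf (big_pred1 ord0) // => k; rewrite /= leqn0 -val_eqE. Qed.

Section LevelRepresentation.
Variables (R : realType) (n M : nat) (psi : PAF R n M.+4).
Hypothesis hC : certainty_preserving psi.
Hypothesis hL : level_SP psi.

Definition Phi (x : 'I_n -> R) : R := cdf (psi (fun k => two_point M (x k))) ord0.

Lemma Phi_bounds x : 0 <= Phi x <= 1.
Proof. by rewrite cdf_ge0 cdf_le1. Qed.

Lemma Phi_upd x i v :
  Phi (upd x i v) = cdf (psi (upd (fun k => two_point M (x k)) i (two_point M v))) ord0.
Proof. by congr (cdf (psi _) _); apply: functional_extensionality => k; rewrite /upd; case: eqP. Qed.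

(* Two-point profiles produce two-point outputs, whose levels all equal [Phi]. *)
Lemma Phi_level x (a : 'I_M.+4) :
  (a < M.+3)%N -> cdf (psi (fun k => two_point M (x k))) a = Phi x.
Proof.
pose ends : {set 'I_M.+4} := [set k : 'I_M.+4 | (k == 0%N :> nat) || (k == M.+3 :> nat)].
have hs : forall k : 'I_M.+4, k \notin ends -> psi (fun k => two_point M (x k)) k = 0.
  apply: certainty_support => // i k; rewrite inE negb_or => /andP[h0 hM].
  by rewrite two_point_mass (negbTE h0) (negbTE hM).
have he : forall k : 'I_M.+4, k != 0%N :> nat -> k != M.+3 :> nat ->
    psi (fun k => two_point M (x k)) k = 0.
  by move=> k h0 hM; apply: hs; rewrite inE negb_or h0.
by move=> ha; rewrite /Phi !(cdf_ends_support he).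
Qed.

Lemma Phi_rep P (a : 'I_M.+4) :
  (a < M.+3)%N -> cdf (psi P) a = Phi (fun k => cdf (P k) a).
Proof.
move=> ha; rewrite -(Phi_level _ ha).
have tp_level : forall j, cdf (two_point M (cdf (P j) a)) a = cdf (P j) a.
  by move=> j; rewrite cdf_two_point // clamp01_id // cdf_ge0 cdf_le1.
pose Q z := (forall j, cdf (z j) a = cdf (P j) a) /\ cdf (psi z) a = cdf (psi P) a.
suff [_ ->] : Q (fun k => two_point M (cdf (P k) a)) by [].
apply: (coord_ind (x := P)) => [|z j [hz hpsi]]; first by [].
split; first by move=> k; rewrite /upd; case: eqP => // ->.
by rewrite level_invariance // tp_level hz.
Qed.

Lemma Phi_clamped x i :
  unit_cube x -> clamped (x i) (Phi (upd x i 0)) (Phi (upd x i 1)) (Phi x).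
Proof.
move=> ux; rewrite !Phi_upd.
set P := fun k => two_point M (x k).
have tp0 : forall v : R, cdf (two_point M v) (@ord0 M.+3) = clamp01 v.
  by move=> v; rewrite cdf_two_point.
have Pi : cdf (P i) ord0 = x i by rewrite tp0 clamp01_id.
have c0 : cdf (two_point M (0 : R)) ord0 = 0 by rewrite tp0 clamp01_id ?in01_0.
have c1 : cdf (two_point M (1 : R)) ord0 = 1 by rewrite tp0 clamp01_id ?in01_1.
have lo := level_SP_report0 hL i P c0.
have hi := level_SP_report1 hL i P c1.
have [A1 _] := hL i P (two_point M 0) ord0.
have [_ A2] := hL i P (two_point M 1) ord0.
rewrite Pi in A1 A2; rewrite /Phi -/P.
split; [exact: lo | exact: hi | move=> h | move=> h]; apply/eqP.
- by rewrite eq_le A1 // lo.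
- by rewrite eq_le hi A2.
Qed.

Lemma Phi_zero : Phi (fun _ => 0) = 0.
Proof.
rewrite /Phi cdf_first; apply: (certainty_support hC (A := [set~ ord0])).
  by move=> i k; rewrite !inE negbK => /eqP ->; rewrite two_point_mass /= clamp01_id ?in01_0.
by rewrite !inE negbK.
Qed.

Lemma Phi_one : Phi (fun _ => 1) = 1.
Proof.
have probA1 : forall p : prob R M.+4, probA p [set ord0] = p ord0.
  by move=> p; rewrite /probA big_set1.
rewrite /Phi cdf_first -probA1; apply: hC => i.
by rewrite probA1 two_point_mass /= clamp01_id ?in01_1.
Qed.

End LevelRepresentation.

Section ClampedFunctions.
Variables (R : realType) (n : nat) (F : ('I_n -> R) -> R).
Hypothesis F_clamped : forall x i, unit_cube x ->
  clamped (x i) (F (upd x i 0)) (F (upd x i 1)) (F x).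

Lemma slice_clamped_i x i j u v :
  unit_cube x -> 0 <= u <= 1 -> 0 <= v <= 1 -> i != j ->
  clamped u (F (upd (upd x i 0) j v)) (F (upd (upd x i 1) j v)) (F (upd (upd x i u) j v)).
Proof.
move=> ux hu hv hij; have ji : j != i by rewrite eq_sym.
have := F_clamped i (unit_cube_upd j (unit_cube_upd i ux hu) hv).
by rewrite !(upd_comm _ _ _ ji) !upd_upd upd_neq // upd_eq.
Qed.

Lemma slice_clamped_j x i j u v :
  unit_cube x -> 0 <= u <= 1 -> 0 <= v <= 1 -> i != j ->
  clamped v (F (upd (upd x i u) j 0)) (F (upd (upd x i u) j 1)) (F (upd (upd x i u) j v)).
Proof.
move=> ux hu hv hij.
by have := F_clamped j (unit_cube_upd j (unit_cube_upd i ux hu) hv); rewrite !upd_upd upd_eq.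
Qed.

Hypothesis F_zero : F (fun _ => 0) = 0.
Hypothesis F_one : F (fun _ => 1) = 1.

Hypothesis F_no_low_pivots : forall x i j, unit_cube x -> i != j ->
  ~ (F (upd (upd x i 0) j 0) < F (upd (upd x i 1) j 0) /\
     F (upd (upd x i 0) j 0) < F (upd (upd x i 0) j 1)).
Hypothesis F_no_high_pivots : forall x i j, unit_cube x -> i != j ->
  ~ (F (upd (upd x i 1) j 0) < F (upd (upd x i 1) j 1) /\
     F (upd (upd x i 0) j 1) < F (upd (upd x i 1) j 1)).

Definition pivotal i x : Prop := F (upd x i 0) < F (upd x i 1).

Lemma pivot_corners x i j : unit_cube x -> i != j -> pivotal i x ->
  F (upd (upd x i 0) j 0) = F (upd (upd x i 0) j 1) /\
  F (upd (upd x i 1) j 0) = F (upd (upd x i 1) j 1).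
Proof.
move=> ux hij piv; have ji : j != i by rewrite eq_sym.
have u0 := in01_0 R; have u1 := in01_1 R.
have fix_j : forall u, upd (upd x i u) j (x j) = upd x i u.
  move=> u; apply: functional_extensionality => k; rewrite /upd.
  by case: eqP => [->|//]; rewrite (negbTE ji).
pose a := F (upd (upd x i 0) j 0); pose b := F (upd (upd x i 1) j 0).
pose c := F (upd (upd x i 0) j 1); pose d := F (upd (upd x i 1) j 1).
have Clo : clamped (x j) a c (F (upd x i 0)).
  by rewrite -fix_j; apply: slice_clamped_j ux u0 (ux j) hij.
have Chi : clamped (x j) b d (F (upd x i 1)).
  by rewrite -fix_j; apply: slice_clamped_j ux u1 (ux j) hij.
have hab : a <= b by apply: clamped_le (slice_clamped_i ux u0 u0 hij).
have hcd : c <= d by apply: clamped_le (slice_clamped_i ux u0 u1 hij).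
have hac : a <= c := clamped_le Clo.
have hbd : b <= d := clamped_le Chi.
have N1 : ~ (a < b /\ a < c) := F_no_low_pivots ux hij.
have N2 : ~ (b < d /\ c < d) := F_no_high_pivots ux hij.
have eac : a = c.
  move: hac; rewrite le_eqVlt => /orP[/eqP // | ac].
  have eab : a = b := eq_of_le_not_lt hab (fun ab => N1 (conj ab ac)).
  have ecd : c = d.
    apply: (eq_of_le_not_lt hcd) => cd.
    by apply: N2; rewrite -eab (lt_trans ac cd).
  rewrite /pivotal in piv; rewrite eab ecd in Clo.
  by move: piv; rewrite (clamped_uniq Chi Clo) ltxx.
split=> //; apply: (eq_of_le_not_lt hbd) => bd.
have ecd : c = d := eq_of_le_not_lt hcd (fun cd => N2 (conj bd cd)).
by move: bd; rewrite -ecd -eac ltNge hab.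
Qed.

Lemma pivotal_stable x i j v : unit_cube x -> i != j -> 0 <= v <= 1 -> pivotal i x ->
  F (upd (upd x j v) i 0) = F (upd x i 0) /\ F (upd (upd x j v) i 1) = F (upd x i 1).
Proof.
move=> ux hij hv piv; have ji : j != i by rewrite eq_sym.
have [e0 e1] := pivot_corners ux hij piv.
have fix_j : forall u, upd (upd x i u) j (x j) = upd x i u.
  move=> u; apply: functional_extensionality => k; rewrite /upd.
  by case: eqP => [->|//]; rewrite (negbTE ji).
have flat : forall u, 0 <= u <= 1 -> F (upd (upd x i u) j 0) = F (upd (upd x i u) j 1) ->
    F (upd (upd x j v) i u) = F (upd x i u).
  move=> u hu e; rewrite -(upd_comm _ _ _ hij) -{2}fix_j.
  rewrite (clamped_point (slice_clamped_j ux hu hv hij) e).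
  by rewrite (clamped_point (slice_clamped_j ux hu (ux j) hij) e).
by split; apply: flat; rewrite ?in01_0 ?in01_1.
Qed.

Lemma pivotal_dictator i x : unit_cube x -> pivotal i x ->
  forall y, unit_cube y -> F y = y i.
Proof.
move=> ux piv.
have stable : forall y, unit_cube y ->
    F (upd y i 0) = F (upd x i 0) /\ F (upd y i 1) = F (upd x i 1).
  move=> y uy.
  pose Q z := unit_cube z /\ F (upd z i 0) = F (upd x i 0) /\ F (upd z i 1) = F (upd x i 1).
  suff [_ //] : Q y.
  apply: (coord_ind (x := x)) => [|z j [uz [e0 e1]]]; first by [].
  split; first exact: unit_cube_upd.
  have [-> | hij] := eqVneq j i; first by rewrite !upd_upd.
  have pz : pivotal i z by rewrite /pivotal e0 e1.
  have ij : i != j by rewrite eq_sym.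
  have [f0 f1] := pivotal_stable uz ij (uy j) pz.
  by rewrite f0 f1.
have const_upd : forall (c : R), upd (fun _ => c) i c = (fun _ => c).
  by move=> c; apply: functional_extensionality => k; rewrite /upd; case: eqP.
have [lo _] := stable _ (fun _ => in01_0 R).
have [_ hi] := stable _ (fun _ => in01_1 R).
rewrite const_upd F_zero in lo; rewrite const_upd F_one in hi.
move=> y uy; have [e0 e1] := stable y uy; case/andP: (uy i) => y0 y1.
by apply: (clamped_mid (F_clamped i uy)); rewrite ?e0 ?e1 -?lo -?hi.
Qed.

(* Since [F] moves from 0 to 1, some coordinate is pivotal somewhere. *)
Lemma some_pivotal : exists i x, unit_cube x /\ pivotal i x.
Proof.
apply: NNPP => none.
have flat : forall z j v, unit_cube z -> 0 <= v <= 1 -> F (upd z j v) = F z.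
  move=> z j v uz hv.
  have e : F (upd z j 0) = F (upd z j 1).
    apply: (eq_of_le_not_lt (clamped_le (F_clamped j uz))) => piv.
    by apply: none; exists j, z.
  have := F_clamped j (unit_cube_upd j uz hv); rewrite !upd_upd => /clamped_point ->//.
  by rewrite (clamped_point (F_clamped j uz) e).
pose Q z := unit_cube z /\ F z = 0.
suff [_] : Q (fun _ => 1) by rewrite F_one => /eqP; rewrite oner_eq0.
apply: (coord_ind (x := fun _ => 0)) => [|z j [uz e]]; first by split=> // k; apply: in01_0.
by split; [apply: unit_cube_upd | rewrite flat]; rewrite ?in01_1.
Qed.

Lemma clamped_projection : exists i, forall x, unit_cube x -> F x = x i.
Proof. by have [i [x [ux piv]]] := some_pivotal; exists i; apply: pivotal_dictator piv. Qed.

End ClampedFunctions.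

Definition alt1 M : 'I_M.+4 := @Ordinal M.+4 1%N isT.
Definition alt2 M : 'I_M.+4 := @Ordinal M.+4 2%N isT.

(* If two distributions have the same CDF at every level but the second one,
   they differ only on the second and third alternatives, so their L1
   distances to any [q] differ only by the contributions of these atoms. *)
Lemma L1dist_level1 (R : realType) M (p p' q : prob R M.+4) :
  (forall k : nat, k != 1%N -> cdfn p k = cdfn p' k) ->
  L1dist p q - L1dist p' q =
  (`|(cdf p (alt1 M) - cdf p ord0) - (cdf q (alt1 M) - cdf q ord0)| +
   `|(cdf p (alt2 M) - cdf p (alt1 M)) - (cdf q (alt2 M) - cdf q (alt1 M))|) -
  (`|(cdf p' (alt1 M) - cdf p' ord0) - (cdf q (alt1 M) - cdf q ord0)| +
   `|(cdf p' (alt2 M) - cdf p' (alt1 M)) - (cdf q (alt2 M) - cdf q (alt1 M))|).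
Proof.
move=> h.
have mass1 : forall r : prob R M.+4, r (alt1 M) = cdf r (alt1 M) - cdf r ord0.
  by move=> r; rewrite mass_cdfn.
have mass2 : forall r : prob R M.+4, r (alt2 M) = cdf r (alt2 M) - cdf r (alt1 M).
  by move=> r; rewrite mass_cdfn.
have same : forall k : 'I_M.+4, k != alt1 M -> k != alt2 M -> p k = p' k.
  move=> [k hk] h1 h2; rewrite -!val_eqE /= in h1 h2.
  rewrite (mass_cdfn p) (mass_cdfn p') /= (h k h1).
  by case: ifP => // hk0; rewrite h //; move/negbT: hk0; lia.
have ne : alt1 M != alt2 M by rewrite -val_eqE.
rewrite /L1dist (bigD1 (alt1 M)) // [X in _ + X - _](bigD1 (alt2 M)) //=.
rewrite [X in _ - X](bigD1 (alt1 M)) // [X in _ - (_ + X)](bigD1 (alt2 M)) //=.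
rewrite (eq_bigr (fun k => `|p' k - q k|)); last by move=> k /andP [h1 h2]; rewrite same.
rewrite !mass1 !mass2; lra.
Qed.

Definition lev3 (R : realType) (y0 y1 y2 : R) (k : nat) : R :=
  if k is k'.+1 then (if k' is 0 then y1 else y2) else y0.

Definition step3 (R : realType) M (y0 y1 y2 : R) : prob R M.+4 :=
  of_levels M.+3 (lev3 y0 y1 y2).

Definition chain3 (R : realDomainType) (y0 y1 y2 : R) : bool :=
  [&& 0 <= y0, y0 <= y1, y1 <= y2 & y2 <= 1].

Lemma lev3_bounds (R : realType) (y0 y1 y2 : R) k :
  chain3 y0 y1 y2 -> 0 <= lev3 y0 y1 y2 k <= 1.
Proof. by case/and4P=> h0 h1 h2 h3; case: k => [|[|k]] /=; apply/andP; split; lra. Qed.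

Lemma cdf_step3 (R : realType) M (y0 y1 y2 : R) (a : 'I_M.+4) :
  chain3 y0 y1 y2 -> (a < M.+3)%N -> cdf (step3 M y0 y1 y2) a = lev3 y0 y1 y2 a.
Proof.
move=> hy ha; rewrite cdf_of_levels // runmax_id // => [k _|k _]; first exact: lev3_bounds.
by case/and4P: hy => h0 h1 h2 h3; case: k => [|[|k]] /=.
Qed.

Section L1Constraints.
Variables (R : realType) (n M : nat) (psi : PAF R n M.+4).
Hypotheses (hC : certainty_preserving psi) (hL : level_SP psi) (hL1 : L1_SP psi).

Local Notation F := (Phi psi).

Definition prof2 x i j (qi qj : prob R M.+4) : 'I_n -> prob R M.+4 :=
  upd (upd (fun k => two_point M (x k)) i qi) j qj.

Lemma cdf_prof2 x i j (y0 y1 y2 z0 z1 z2 : R) (a : 'I_M.+4) :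
  unit_cube x -> chain3 y0 y1 y2 -> chain3 z0 z1 z2 -> (a < M.+3)%N ->
  cdf (psi (prof2 x i j (step3 M y0 y1 y2) (step3 M z0 z1 z2))) a =
  F (upd (upd x i (lev3 y0 y1 y2 a)) j (lev3 z0 z1 z2 a)).
Proof.
move=> ux hy hz ha; rewrite Phi_rep //; congr Phi.
apply: functional_extensionality => k; rewrite /prof2 /upd.
case: eqP => _; first exact: cdf_step3.
case: eqP => _; first exact: cdf_step3.
by rewrite cdf_two_point // clamp01_id.
Qed.

Lemma L1_SP_levels x i j (y0 y1 y2 y0' y1' y2' z0 z1 z2 g0 g1 g1' g2 : R) :
  unit_cube x -> i != j ->
  chain3 y0 y1 y2 -> chain3 y0' y1' y2' -> chain3 z0 z1 z2 ->
  F (upd (upd x i y0) j z0) = g0 -> F (upd (upd x i y0') j z0) = g0 ->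
  F (upd (upd x i y1) j z1) = g1 -> F (upd (upd x i y1') j z1) = g1' ->
  F (upd (upd x i y2) j z2) = g2 -> F (upd (upd x i y2') j z2) = g2 ->
  `|(g1 - g0) - (y1 - y0)| + `|(g2 - g1) - (y2 - y1)| <=
  `|(g1' - g0) - (y1 - y0)| + `|(g2 - g1') - (y2 - y1)|.
Proof.
move=> ux hij hy hy' hz e0 e0' e1 e1' e2 e2'.
set q := step3 M y0 y1 y2; set q' := step3 M y0' y1' y2'.
set P := prof2 x i j q (step3 M z0 z1 z2).
set P' := prof2 x i j q' (step3 M z0 z1 z2).
have dev : upd P i q' = P'.
  by rewrite /P /prof2 (upd_comm _ _ _ (_ : j != i)) ?upd_upd // eq_sym.
have Pi : P i = q by rewrite /P /prof2 upd_neq ?upd_eq // eq_sym.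
have lvl2 : forall a : 'I_M.+4, (2 <= a)%N -> forall u0 u1 u2 : R, lev3 u0 u1 u2 a = u2.
  by move=> [[|[|k]] hk] //=.
have cP : forall a : 'I_M.+4, (a < M.+3)%N ->
    cdf (psi P) a = F (upd (upd x i (lev3 y0 y1 y2 a)) j (lev3 z0 z1 z2 a)).
  by move=> a ha; apply: cdf_prof2.
have cP' : forall a : 'I_M.+4, (a < M.+3)%N ->
    cdf (psi P') a = F (upd (upd x i (lev3 y0' y1' y2' a)) j (lev3 z0 z1 z2 a)).
  by move=> a ha; apply: cdf_prof2.
have agree : forall k : nat, k != 1%N -> cdfn (psi P) k = cdfn (psi P') k.
  move=> k hk; case: (ltnP k M.+3) => hkM; last by rewrite !cdfn_last.
  have hk4 : (k < M.+4)%N by lia.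
  rewrite !(cdfn_ord _ (Ordinal hk4)) cP // cP' //.
  case: k hk hk4 hkM => [|[|k]] //= *; first by rewrite e0 e0'.
  by rewrite e2 e2'.
have := hL1 i P q'; rewrite dev Pi -subr_le0 (L1dist_level1 _ agree).
rewrite !cdf_step3 // !cP // !cP' //= e0 e0' e1 e1' e2 e2'; lra.
Qed.

End L1Constraints.

Lemma norm_bounds (R : realDomainType) (x : R) : x <= `|x| /\ - x <= `|x|.
Proof. by split; [|rewrite -normrN]; apply: ler_norm. Qed.

Section NoDoublePivots.
Variables (R : realType) (n M : nat) (psi : PAF R n M.+4).
Hypotheses (hC : certainty_preserving psi) (hL : level_SP psi) (hL1 : L1_SP psi).

Local Notation F := (Phi psi).

Let F_clamped := Phi_clamped hL.

(* If both [i] and [j] were pivotal at the bottom-left corner of a slice,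
   agent [i] with levels (0, s, s) would gain by reporting (0, t, t). *)
Lemma Phi_no_low_pivots x i j : unit_cube x -> i != j ->
  ~ (F (upd (upd x i 0) j 0) < F (upd (upd x i 1) j 0) /\
     F (upd (upd x i 0) j 0) < F (upd (upd x i 0) j 1)).
Proof.
move=> ux hij [hab hac].
pose a := F (upd (upd x i 0) j 0); pose b := F (upd (upd x i 1) j 0).
pose c := F (upd (upd x i 0) j 1).
have a0 : 0 <= a by case/andP: (Phi_bounds psi (upd (upd x i 0) j 0)).
have b1 : b <= 1 by case/andP: (Phi_bounds psi (upd (upd x i 1) j 0)).
have c1 : c <= 1 by case/andP: (Phi_bounds psi (upd (upd x i 0) j 1)).
pose t := Num.min b c; pose s := (a + t) / 2.
have tb : t <= b by rewrite ge_min lexx.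
have tc : t <= c by rewrite ge_min lexx orbT.
have at_ : a < t by rewrite lt_min hab hac.
have [as_ st] : a < s /\ s < t by split; rewrite /s; lra.
have u0 := in01_0 R; have u1 := in01_1 R.
have in01 : forall v : R, a <= v -> v <= c -> 0 <= v <= 1 by move=> v *; apply/andP; split; lra.
have us := in01 s (ltW as_) (ltW (lt_le_trans st tc)).
have V0 : F (upd (upd x i 0) j s) = s.
  by apply: (clamped_mid (slice_clamped_j F_clamped ux u0 us hij)); rewrite -/a -/c; lra.
have Vb : F (upd (upd x i 1) j s) = b.
  by apply: (clamped_lo (slice_clamped_j F_clamped ux u1 us hij)); rewrite -/b; lra.
have V1 : forall u, s <= u -> u <= b -> F (upd (upd x i u) j s) = u.
  move=> u h1 h2; have hu : 0 <= u <= 1 by apply/andP; split; lra.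
  by apply: (clamped_mid (slice_clamped_i F_clamped ux hu us hij)); rewrite ?V0 ?Vb.
have V2 : forall u, 0 <= u -> u <= c -> F (upd (upd x i u) j 1) = c.
  move=> u h1 h2; have hu : 0 <= u <= 1 by apply/andP; split; lra.
  by apply: (clamped_lo (slice_clamped_i F_clamped ux hu u1 hij)); rewrite -/c.
have chains : [/\ chain3 0 s s, chain3 0 t t & chain3 s s 1].
  by split; apply/and4P; split; lra.
case: chains => ch ch' chz.
have Fss : F (upd (upd x i s) j s) = s by apply: V1; lra.
have Fts : F (upd (upd x i t) j s) = t by apply: V1; lra.
have Fs1 : F (upd (upd x i s) j 1) = c by apply: V2; lra.
have Ft1 : F (upd (upd x i t) j 1) = c by apply: V2; lra.
have := L1_SP_levels hC hL hL1 ux hij ch ch' chz V0 V0 Fss Fts Fs1 Ft1.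
have [e1 _] := norm_bounds (c - s - (s - s)); have [_ e2] := norm_bounds (s - s - (s - 0)).
have e3 : `|t - s - (s - 0)| < t by rewrite ltr_norml; apply/andP; split; lra.
have e4 : `|c - t - (s - s)| <= c - t by rewrite ler_norml; apply/andP; split; lra.
lra.
Qed.

(* Dually, if both were pivotal at the top-right corner, agent [i] with
   levels (s, s, 1) would gain by reporting (t, t, 1). *)
Lemma Phi_no_high_pivots x i j : unit_cube x -> i != j ->
  ~ (F (upd (upd x i 1) j 0) < F (upd (upd x i 1) j 1) /\
     F (upd (upd x i 0) j 1) < F (upd (upd x i 1) j 1)).
Proof.
move=> ux hij [hbd hcd].
pose a := F (upd (upd x i 0) j 0); pose b := F (upd (upd x i 1) j 0).
pose c := F (upd (upd x i 0) j 1); pose d := F (upd (upd x i 1) j 1).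
have b0 : 0 <= b by case/andP: (Phi_bounds psi (upd (upd x i 1) j 0)).
have c0 : 0 <= c by case/andP: (Phi_bounds psi (upd (upd x i 0) j 1)).
have d1 : d <= 1 by case/andP: (Phi_bounds psi (upd (upd x i 1) j 1)).
have u0 := in01_0 R; have u1 := in01_1 R.
have ab : a <= b by apply: clamped_le (slice_clamped_i F_clamped ux u0 u0 hij).
pose t := Num.max b c; pose s := (t + d) / 2.
have bt : b <= t by rewrite le_max lexx.
have ct : c <= t by rewrite le_max lexx orbT.
have td : t < d by rewrite gt_max hbd hcd.
have [ts sd] : t < s /\ s < d by split; rewrite /s; lra.
have us : 0 <= s <= 1 by apply/andP; split; lra.
have W0 : forall u, b <= u -> u <= 1 -> F (upd (upd x i u) j 0) = b.
  move=> u h1 h2; have hu : 0 <= u <= 1 by apply/andP; split; lra.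
  by apply: (clamped_hi (slice_clamped_i F_clamped ux hu u0 hij)); rewrite -/b.
have Wc : F (upd (upd x i 0) j s) = c.
  by apply: (clamped_hi (slice_clamped_j F_clamped ux u0 us hij)); rewrite -/c; lra.
have Ws : F (upd (upd x i 1) j s) = s.
  by apply: (clamped_mid (slice_clamped_j F_clamped ux u1 us hij)); rewrite -/b -/d; lra.
have W1 : forall u, c <= u -> u <= s -> F (upd (upd x i u) j s) = u.
  move=> u h1 h2; have hu : 0 <= u <= 1 by apply/andP; split; lra.
  by apply: (clamped_mid (slice_clamped_i F_clamped ux hu us hij)); rewrite ?Wc ?Ws.
have chains : [/\ chain3 s s 1, chain3 t t 1 & chain3 0 s s].
  by split; apply/and4P; split; lra.
case: chains => ch ch' chz.
have Fs0 : F (upd (upd x i s) j 0) = b by apply: W0; lra.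
have Ft0 : F (upd (upd x i t) j 0) = b by apply: W0; lra.
have Fss : F (upd (upd x i s) j s) = s by apply: W1; lra.
have Fts : F (upd (upd x i t) j s) = t by apply: W1; lra.
have := L1_SP_levels hC hL hL1 ux hij ch ch' chz Fs0 Ft0 Fss Fts Ws Ws.
have [e1 _] := norm_bounds (s - b - (s - s)); have [_ e2] := norm_bounds (s - s - (1 - s)).
have e3 : `|t - b - (s - s)| <= t - b by rewrite ler_norml; apply/andP; split; lra.
have e4 : `|s - t - (1 - s)| < 1 - t by rewrite ltr_norml; apply/andP; split; lra.
lra.
Qed.

End NoDoublePivots.

Lemma dictatorial_SP (R : realType) n m (psi : PAF R n m) :
  dictatorial psi -> level_SP psi /\ L1_SP psi.
Proof.
case=> d hd; split=> [i P q a | i P q]; rewrite !hd.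
  have [-> | hid] := eqVneq i d; last by rewrite upd_neq 1?eq_sym //; split=> _.
  by rewrite upd_eq; split=> /[dup] h; rewrite ltNge ?le_eqVlt ?h ?orbT.
have [-> | hid] := eqVneq i d; last by rewrite upd_neq 1?eq_sym.
rewrite /L1dist big1 => [|k _]; last by rewrite subrr normr0.
by apply: sumr_ge0 => k _; apply: normr_ge0.
Qed.

Lemma projection_dictatorial (R : realType) n M (psi : PAF R n M.+4) :
  level_SP psi -> certainty_preserving psi ->
  (exists i, forall x, unit_cube x -> Phi psi x = x i) -> dictatorial psi.
Proof.
move=> hL hC [i hi]; exists i => P; apply: prob_cdfn_inj => j.
case: (ltnP j M.+3) => hj; last by rewrite !cdfn_last.
have hj4 : (j < M.+4)%N by lia.
rewrite !(cdfn_ord _ (Ordinal hj4)) Phi_rep // hi // => k.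
by rewrite cdf_ge0 cdf_le1.
Qed.

Theorem mainTheorem16 (R : realType) (n m : nat) (psi : PAF R n m) :
  (4 <= m)%N -> certainty_preserving psi ->
  ((level_SP psi /\ L1_SP psi) <-> dictatorial psi).
Proof.
move=> hm hC; split; last exact: dictatorial_SP.
case=> hL hL1; case: m hm psi hC hL hL1 => [|[|[|[|M]]]] // _ psi hC hL hL1.
apply: (projection_dictatorial hL hC).
exact: clamped_projection (Phi_clamped hL) (Phi_zero hC) (Phi_one hC)
  (Phi_no_low_pivots hC hL hL1) (Phi_no_high_pivots hC hL hL1).
Qed.
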